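(* Consider the setting in the context with $P_i=\tau_iI_n$, $Q_i=\zeta_iI_n$, $\rho>0$, $0<\gamma<2$. If for every $i\in\mathcal{V}$ $$\zeta_i>\frac{C_i}{m}(C_i+m),\qquad \tau_i>\max\Big\{\rho d_i+4(N-1)\rho\sqrt{n},\ \rho\Big(\frac{N}{2-\gamma}-1\Big)d_i\Big\},$$ then $\bm{G}_1^{\dagger}\succ0$, $\bm{G}_2\succ\bm{G}_3$, and there exist $\epsilon_i\in(0,1)$ with $\sum_i\epsilon_i<2-\gamma$ and $\tau_i>\rho(\frac1{\epsilon_i}-1)d_i$ for all $i$.
   Context: Let $\mathcal{G}=(\mathcal{V},\mathcal{E})$ be a connected undirected graph with $\mathcal{V}=\{1,\dots,N\}$, $N\ge2$, and let $d_i$ be the degree of $i$. The matrix $\bm{A}\in\mathbb{R}^{|\mathcal{E}|n\times Nn}$ has one block row per edge $\{i,j\}$ ($i<j$) with $I_n$ in block column $i$, $-I_n$ in block column $j$, zeros elsewhere; $A_i$ is its $i$-th block column, so $A_i^TA_i=d_iI_n$ and, for $i\ne j$, $A_i^TA_j=-I_n$ if $\{i,j\}\in\mathcal{E}$ and $0$ otherwise. Constants: $C_i>0$ (Lipschitz constants of the gradients of local losses $f_i$), $\mu_2>0$ and $m$ with $0<m\le\mu_2$. Matrices: $\bm{G}_1=\mathrm{blkdiag}(\rho d_iI_n+P_i)_i$, $\bm{G}_1^{\dagger}=\bm{G}_1-\rho\bm{A}^T\bm{A}$, $\bm{G}_2=\mathrm{blkdiag}(Q_i)_i$, $\bm{G}_3=\mathrm{blkdiag}\big(\frac{C_i}{m}(C_i+m)I_n\big)_i$.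 *)

From HB Require Import structures.
From mathcomp Require Import all_boot all_order all_algebra.
Set Implicit Arguments. Unset Strict Implicit. Unset Printing Implicit Defensive.
Import Order.TTheory GRing.Theory Num.Theory.
Local Open Scope ring_scope.

(* Graph on vertices 'I_N (vertex i+1 of the paper is i : 'I_N),
   given by a boolean adjacency relation [adj]. *)
Definition simple_graph N (adj : rel 'I_N) : Prop :=
  (forall i j, adj i j = adj j i) /\ (forall i, ~~ adj i i).

Definition connected_graph N (adj : rel 'I_N) : Prop :=
  forall i j, connect adj i j.

Definition degree N (adj : rel 'I_N) (i : 'I_N) : nat := #|[set j | adj i j]|.

Definition edgeT N (adj : rel 'I_N) : finType :=
  {p : 'I_N * 'I_N | (p.1 < p.2)%N && adj p.1 p.2}.

(* Block index: entry k of block i is mxvec_index i k = i*n + k. *)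
(* Incidence matrix A in R^{|E|n x Nn}: one block row per edge {i,j}, i<j,
   with I_n in block column i and -I_n in block column j. *)
Definition incA (R : pzRingType) N n (adj : rel 'I_N)
  : 'M[R]_(#|edgeT adj| * n, N * n) :=
  \sum_(e : edgeT adj) \sum_(k < n)
     (delta_mx (mxvec_index (enum_rank e) k) (mxvec_index (val e).1 k)
      - delta_mx (mxvec_index (enum_rank e) k) (mxvec_index (val e).2 k)).

Definition blkdiag (R : pzRingType) N n (B : 'I_N -> 'M[R]_n) : 'M[R]_(N * n) :=
  \sum_(i < N) \sum_(k < n) \sum_(l < n)
     B i k l *: delta_mx (mxvec_index i k) (mxvec_index i l).

Definition posdef (R : numDomainType) m (M : 'M[R]_m) : Prop :=
  M^T = M /\ forall x : 'cV[R]_m, x != 0 -> 0 < (x^T *m M *m x) 0 0.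

Definition loewner_gt (R : numDomainType) m (M1 M2 : 'M[R]_m) : Prop :=
  posdef (M1 - M2).

(* Write x_i for the i-th block of x and |.| for the Euclidean norm.  Then
   x^T G1dag x = sum_i (rho d_i + tau_i) |x_i|^2 - rho sum_{ij in E} |x_i - x_j|^2,
   and |x_i - x_j|^2 <= 2 |x_i|^2 + 2 |x_j|^2 together with the handshake identity
   sum_{ij in E} (|x_i|^2 + |x_j|^2) = sum_i d_i |x_i|^2 bounds this from below by
   sum_i (tau_i - rho d_i) |x_i|^2 > 0.  G2 - G3 is block diagonal with positive
   scalar blocks.  For the eps_i, take 1/eps_i slightly above K = N/(2 - gamma) > 1:
   then sum_i eps_i < N/K = 2 - gamma, and the slack in tau_i > rho (K - 1) d_i
   absorbs the excess of 1/eps_i over K. *)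

From HB Require Import structures.
From mathcomp Require Import all_boot all_order all_algebra.
From mathcomp Require Import ring lra.
Set Implicit Arguments. Unset Strict Implicit. Unset Printing Implicit Defensive.
Import Order.TTheory GRing.Theory Num.Theory.
Local Open Scope ring_scope.

Section QuadraticForm.
Variable R : comPzRingType.

Definition qform p (M : 'M[R]_p) (x : 'cV[R]_p) : R := (x^T *m M *m x) 0 0.

Lemma qformB p (M1 M2 : 'M[R]_p) x : qform (M1 - M2) x = qform M1 x - qform M2 x.
Proof. by rewrite /qform mulmxBr mulmxBl !mxE. Qed.

Lemma qformZ p a (M : 'M[R]_p) x : qform (a *: M) x = a * qform M x.
Proof. by rewrite /qform -scalemxAr -scalemxAl mxE. Qed.

Lemma qform_sum p (I : finType) (F : I -> 'M[R]_p) x :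
  qform (\sum_i F i) x = \sum_i qform (F i) x.
Proof. by rewrite /qform mulmx_sumr mulmx_suml summxE. Qed.

Lemma qform_delta p (a b : 'I_p) x : qform (delta_mx a b) x = x a 0 * x b 0.
Proof.
rewrite /qform mxE (bigD1 b) //= big1 ?addr0; last first.
  move=> j /negPf jb; rewrite mxE big1 ?mul0r // => l _.
  by rewrite !mxE jb andbF mulr0.
congr (_ * _); rewrite mxE (bigD1 a) //= big1 ?addr0; last first.
  by move=> l /negPf la; rewrite !mxE la mulr0.
by rewrite !mxE !eqxx mulr1.
Qed.

Lemma mul_delta_mx_col p q (a : 'I_p) (b : 'I_q) (x : 'cV[R]_q) :
  delta_mx a b *m x = x b 0 *: delta_mx a 0.
Proof.
apply/matrixP => i j; rewrite !mxE (bigD1 b) //= big1 ?addr0; last first.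
  by move=> l /negPf lb; rewrite !mxE lb andbF mul0r.
by rewrite !mxE eqxx andbT (ord1 j) eqxx andbT mulrC.
Qed.

Lemma sqnorm_sum_delta (T : finType) p (r : T -> 'I_p) (v : T -> R) :
  injective r ->
  let y := \sum_t v t *: delta_mx (r t) (0 : 'I_1) in
  (y^T *m y) 0 0 = \sum_t v t ^+ 2.
Proof.
move=> r_inj y; rewrite /y [(\sum_t _)^T]linear_sum mulmx_suml summxE.
apply: eq_bigr => t _.
rewrite mulmx_sumr summxE (bigD1 t) //= big1 ?addr0 => [|s st].
  by rewrite [(_ *: _)^T]linearZ /= trmx_delta -scalemxAl -scalemxAr mul_delta_mx !mxE
    !eqxx mulr1 expr2.
rewrite [(_ *: _)^T]linearZ /= trmx_delta -scalemxAl -scalemxAr mul_delta_mx_cond.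
have /negPf -> : r t != r s by apply: contra st => /eqP /r_inj ->.
by rewrite mulr0n !scaler0 mxE.
Qed.

Definition blk N n (x : 'cV[R]_(N * n)) (i : 'I_N) (k : 'I_n) : R :=
  x (mxvec_index i k) 0.

Definition blk_sqnorm N n (x : 'cV[R]_(N * n)) (i : 'I_N) : R :=
  \sum_k blk x i k ^+ 2.

Lemma eq_blkdiag N n (B1 B2 : 'I_N -> 'M[R]_n) :
  (forall i, B1 i = B2 i) -> blkdiag B1 = blkdiag B2.
Proof. by move=> eqB; apply: eq_bigr => i _; rewrite eqB. Qed.

Lemma trmx_blkdiag N n (B : 'I_N -> 'M[R]_n) :
  (blkdiag B)^T = blkdiag (fun i => (B i)^T).
Proof.
rewrite linear_sum; apply: eq_bigr => i _.
rewrite linear_sum exchange_big; apply: eq_bigr => k _.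
rewrite linear_sum; apply: eq_bigr => l _.
by rewrite linearZ /= trmx_delta mxE.
Qed.

Lemma trmx_blkdiag_scalar N n (b : 'I_N -> R) :
  (blkdiag (fun i => b i *: (1%:M : 'M[R]_n)))^T = blkdiag (fun i => b i *: 1%:M).
Proof. by rewrite trmx_blkdiag; apply: eq_blkdiag => i; rewrite linearZ /= trmx1. Qed.

Lemma qform_blkdiag_scalar N n (b : 'I_N -> R) x :
  qform (blkdiag (fun i => b i *: (1%:M : 'M[R]_n))) x =
  \sum_i b i * blk_sqnorm x i.
Proof.
rewrite qform_sum; apply: eq_bigr => i _.
rewrite qform_sum /blk_sqnorm mulr_sumr; apply: eq_bigr => k _.
rewrite qform_sum (bigD1 k) //= big1 ?addr0 => [|l /negPf lk].
  by rewrite qformZ qform_delta !mxE eqxx mulr1 /blk expr2 mulrA.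
by rewrite qformZ !mxE eq_sym lk mulr0 mul0r.
Qed.

Lemma incA_mulmx N n (adj : rel 'I_N) x :
  incA R n adj *m x = \sum_(t : edgeT adj * 'I_n)
    (blk x (val t.1).1 t.2 - blk x (val t.1).2 t.2) *:
      delta_mx (mxvec_index (enum_rank t.1) t.2) (0 : 'I_1).
Proof.
rewrite /incA mulmx_suml; under eq_bigr do rewrite mulmx_suml.
rewrite pair_bigA; apply: eq_bigr => t _.
by rewrite mulmxBl !mul_delta_mx_col -scalerBl.
Qed.

Lemma qform_incA N n (adj : rel 'I_N) x :
  qform ((incA R n adj)^T *m incA R n adj) x =
  \sum_(e : edgeT adj) \sum_(k < n) (blk x (val e).1 k - blk x (val e).2 k) ^+ 2.
Proof.
rewrite /qform mulmxA -trmx_mul -mulmxA incA_mulmx sqnorm_sum_delta ?pair_bigA //.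
move=> [e k] [e' k'] /= /cast_ord_inj /enum_rank_inj.
by case=> /enum_rank_inj -> ->.
Qed.

End QuadraticForm.

Section Handshake.
Variables (V : nmodType) (N : nat) (adj : rel 'I_N).
Hypothesis adj_simple : simple_graph adj.

Lemma sum_edgeT (F : 'I_N * 'I_N -> V) :
  \sum_(e : edgeT adj) F (val e) =
  \sum_(p : 'I_N * 'I_N | (p.1 < p.2)%N && adj p.1 p.2) F p.
Proof. exact: esym (big_sub [pred p : 'I_N * 'I_N | (p.1 < p.2)%N && adj p.1 p.2] F). Qed.

Lemma sum_edgeT_ends (f : 'I_N -> V) :
  \sum_(e : edgeT adj) (f (val e).1 + f (val e).2) = \sum_i f i *+ degree adj i.
Proof.
have [adj_sym adj_irr] := adj_simple.
have swap_inj : injective (fun p : 'I_N * 'I_N => (p.2, p.1)).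
  by move=> [a b] [c d] [-> ->].
rewrite (sum_edgeT (fun p => f p.1 + f p.2)) big_split /=.
rewrite [X in _ + X](reindex_inj swap_inj) /=.
(* The swapped sum sees every edge from its larger end. *)
have -> : \sum_(p : 'I_N * 'I_N | (p.2 < p.1)%N && adj p.2 p.1) f p.1 =
          \sum_(p : 'I_N * 'I_N | adj p.1 p.2 && ~~ (p.1 < p.2)%N) f p.1.
  apply: eq_bigl => -[i j] /=; rewrite adj_sym andbC.
  case: (ltngtP i j) => [||/val_inj ->]; rewrite ?andbF ?andbT //.
  by rewrite (negPf (adj_irr j)).
rewrite (eq_bigl (fun p => adj p.1 p.2 && (p.1 < p.2)%N)) => [|p]; last first.
  by rewrite andbC.
rewrite -bigID /= -(pair_big_dep xpredT (fun i j => adj i j) (fun i _ => f i)).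
apply: eq_bigr => i _; rewrite (eq_bigl (fun j => j \in [set j | adj i j])) => [|j].
  by rewrite sumr_const.
by rewrite inE.
Qed.

End Handshake.

Section Positivity.
Variables (R : realDomainType) (N n : nat).
Implicit Types (x : 'cV[R]_(N * n)) (b c : 'I_N -> R).

Lemma blk_sqnorm_ge0 x i : 0 <= blk_sqnorm x i.
Proof. by apply: sumr_ge0 => k _; apply: sqr_ge0. Qed.

Lemma blk_sqnorm_gt0 x : x != 0 -> exists i, 0 < blk_sqnorm x i.
Proof.
move=> x_neq0; have [r xr_neq0] : exists r, x r 0 != 0.
  apply/existsP; apply: contraNT x_neq0; rewrite negb_exists => /forallP x0.
  by apply/eqP/matrixP => r j; rewrite (ord1 j) mxE; apply/eqP/negPn/x0.
case/mxvec_indexP: r xr_neq0 => i k xik_neq0; exists i.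
rewrite /blk_sqnorm (bigD1 k) //= ltr_pwDl ?sumr_ge0 // => [|l _].
  by rewrite lt_neqAle sqr_ge0 andbT eq_sym sqrf_eq0.
exact: sqr_ge0.
Qed.

Lemma weighted_blk_sqnorm_gt0 c x :
  (forall i, 0 < c i) -> x != 0 -> 0 < \sum_i c i * blk_sqnorm x i.
Proof.
move=> c_gt0 /blk_sqnorm_gt0 [i xi_gt0].
rewrite (bigD1 i) //= ltr_pwDl ?mulr_gt0 ?sumr_ge0 // => j _.
exact: mulr_ge0 (ltW (c_gt0 j)) (blk_sqnorm_ge0 x j).
Qed.

Lemma loewner_gt_blkdiag_scalar b c :
  (forall i, c i < b i) ->
  loewner_gt (blkdiag (fun i => b i *: (1%:M : 'M[R]_n)))
             (blkdiag (fun i => c i *: 1%:M)).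
Proof.
move=> lt_cb; split; first by rewrite linearB /= !trmx_blkdiag_scalar.
move=> x x_neq0; rewrite -/(qform _ x) qformB !qform_blkdiag_scalar -sumrB.
under eq_bigr do rewrite -mulrBl.
by apply: weighted_blk_sqnorm_gt0 => // i; rewrite subr_gt0.
Qed.

Variable adj : rel 'I_N.
Hypothesis adj_simple : simple_graph adj.

Lemma qform_incA_le x :
  qform ((incA R n adj)^T *m incA R n adj) x <=
  2 * \sum_i (degree adj i)%:R * blk_sqnorm x i.
Proof.
rewrite qform_incA mulr_sumr.
under [X in _ <= X]eq_bigr do rewrite mulrCA mulr_natl.
rewrite -(sum_edgeT_ends adj_simple); apply: ler_sum => e _.
rewrite /blk_sqnorm !mulr_sumr -big_split; apply: ler_sum => k _ /=.
set a := blk x _ k; set b := blk x _ k.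
have -> : 2 * a ^+ 2 + 2 * b ^+ 2 = (a - b) ^+ 2 + (a + b) ^+ 2 by ring.
by rewrite lerDl sqr_ge0.
Qed.

Lemma posdef_blkdiag_sub_laplacian (rho : R) t :
  0 <= rho -> (forall i, rho * (degree adj i)%:R < t i) ->
  posdef (blkdiag (fun i => (rho * (degree adj i)%:R + t i) *: (1%:M : 'M[R]_n))
          - rho *: ((incA R n adj)^T *m incA R n adj)).
Proof.
move=> rho_ge0 t_gt; split.
  by rewrite linearB /= linearZ /= trmx_mul trmxK trmx_blkdiag_scalar.
move=> x x_neq0; rewrite -/(qform _ x) qformB qformZ qform_blkdiag_scalar.
pose D := \sum_i (degree adj i)%:R * blk_sqnorm x i.
have -> : \sum_i (rho * (degree adj i)%:R + t i) * blk_sqnorm x i =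
          \sum_i (t i - rho * (degree adj i)%:R) * blk_sqnorm x i + rho * (2 * D).
  rewrite /D !mulr_sumr -big_split; apply: eq_bigr => i _ /=; ring.
rewrite -addrA ltr_pwDl //.
  by apply: weighted_blk_sqnorm_gt0 => // i; rewrite subr_gt0.
by rewrite subr_ge0 ler_wpM2l ?qform_incA_le.
Qed.

End Positivity.

Lemma exists_lt_inv_margin (R : realFieldType) (K c d t : R) :
  1 < K -> 0 < c -> 0 <= d -> c * (K - 1) * d < t ->
  exists2 e, 0 < e < K^-1 & c * (1 / e - 1) * d < t.
Proof.
move=> K_gt1 c_gt0 d_ge0 t_gt.
(* c s (d + 1) is the slack t - c (K - 1) d, so c s d stays below it. *)
pose s := (t - c * (K - 1) * d) / (c * (d + 1)).
have cs_gt0 : 0 < c * s by rewrite mulr_gt0 ?divr_gt0 ?subr_gt0 ?mulr_gt0 //; lra.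
have cs_d1 : c * s * (d + 1) = t - c * (K - 1) * d by rewrite /s; field; lra.
exists (K + s)^-1; last by rewrite div1r invrK; lra.
have s_gt0 : 0 < s by rewrite -(pmulr_rgt0 _ c_gt0).
by rewrite invr_gt0 ltf_pV2 ?posrE; lra.
Qed.

Theorem proposition2 (R : rcfType) (N n : nat) (adj : rel 'I_N)
    (C : 'I_N -> R) (mu2 m rho gamma : R) (tau zeta : 'I_N -> R) :
  (2 <= N)%N ->
  simple_graph adj -> connected_graph adj ->
  (forall i, 0 < C i) -> 0 < mu2 -> 0 < m -> m <= mu2 ->
  0 < rho -> 0 < gamma -> gamma < 2 ->
  (forall i, zeta i > C i / m * (C i + m)) ->
  (forall i, tau i > Num.max
      (rho * (degree adj i)%:R + 4 * (N%:R - 1) * rho * Num.sqrt (n%:R))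
      (rho * (N%:R / (2 - gamma) - 1) * (degree adj i)%:R)) ->
  let G1 := blkdiag (fun i => rho * (degree adj i)%:R *: (1%:M : 'M[R]_n)
                              + tau i *: 1%:M) in
  let G1dag := G1 - rho *: ((incA R n adj)^T *m incA R n adj) in
  let G2 := blkdiag (fun i => zeta i *: (1%:M : 'M[R]_n)) in
  let G3 := blkdiag (fun i => (C i / m * (C i + m)) *: (1%:M : 'M[R]_n)) in
  [/\ posdef G1dag,
      loewner_gt G2 G3 &
      exists eps : 'I_N -> R,
        [/\ forall i, 0 < eps i < 1,
            \sum_(i < N) eps i < 2 - gamma &
            forall i, tau i > rho * (1 / eps i - 1) * (degree adj i)%:R]].
Proof.
move=> N_ge2 adj_simple _ _ _ _ _ rho_gt0 gamma_gt0 gamma_lt2 zeta_gt tau_gt.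
move=> G1 G1dag G2 G3; set K := N%:R / (2 - gamma).
have N_ge2R : 2 <= N%:R :> R by rewrite ler_nat.
have K_gt1 : 1 < K by rewrite ltr_pdivlMr ?subr_gt0 // mul1r; lra.
have tau_gt_deg i : rho * (degree adj i)%:R < tau i.
  have : 0 <= 4 * (N%:R - 1) * rho * Num.sqrt (n%:R : R).
    by rewrite !mulr_ge0 ?sqrtr_ge0 ?ltW //; lra.
  by move: (tau_gt i); rewrite gt_max => /andP[+ _]; lra.
have tau_gt_K i : rho * (K - 1) * (degree adj i)%:R < tau i.
  by move: (tau_gt i); rewrite gt_max => /andP[_].
split.
- rewrite /G1dag /G1 (eq_blkdiag (B2 := fun i => (rho * (degree adj i)%:R + tau i) *: 1%:M)).
    by apply: posdef_blkdiag_sub_laplacian => //; exact: ltW.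
  by move=> i; rewrite scalerDl.
- exact: loewner_gt_blkdiag_scalar.
have [eps eps_lt eps_tau] := fin_all_exists2 (fun i =>
  exists_lt_inv_margin K_gt1 rho_gt0 (ler0n _ _) (tau_gt_K i)).
have K_inv_lt1 : K^-1 < 1 by rewrite invf_lt1 //; lra.
exists eps; split=> // [i|].
  by have /andP[-> /lt_trans ->] := eps_lt i.
have N_gt0 : (0 < N)%N by apply: leq_trans N_ge2.
rewrite (@lt_le_trans _ _ (\sum_(i < N) K^-1)) ?ltr_sum //.
- by apply/hasP; exists (Ordinal N_gt0); rewrite ?mem_index_enum.
- by move=> j _; case/andP: (eps_lt j).
rewrite sumr_const card_ord invf_div -[_ *+ N]mulr_natr divfK //.
by rewrite pnatr_eq0 -lt0n.
Qed.
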